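(* Let $\mathcal T$ be an orbital category. If $\mathcal C,\mathcal D$ are unital $\mathcal T$-weak indexing systems, then $\mathfrak R(\mathcal C)\vee\mathfrak R(\mathcal D)=\mathfrak R(\mathcal C\vee\mathcal D)$ (join in $\mathrm{Transf}_{\mathcal T}$ on the left, in weak indexing systems on the right) and $\mathfrak R(\mathcal C)\cap\mathfrak R(\mathcal D)=\mathfrak R(\mathcal C\cap\mathcal D)$.
   Context: For a small category $\mathcal T$, $\mathbb F_{\mathcal T}$ is the full subcategory of $\mathrm{Fun}(\mathcal T^{op},\mathrm{Set})$ on finite coproducts of representables; $\mathcal T$ is orbital if $\mathbb F_{\mathcal T}$ has pullbacks. $\mathbb F_V:=\mathbb F_{\mathcal T,/V}$, $*_V$ terminal; for $U\to V$, $\mathrm{Res}^V_U$ is pullback and $\mathrm{Ind}^V_U$ postcomposition. A full $\mathcal T$-subcategory assigns isomorphism-closed classes $\mathcal C_V\subseteq\mathrm{Ob}\,\mathbb F_V$ stable under restriction. For $S\in\mathbb F_V$ with orbits $U$ and $T_U\in\mathbb F_U$, $\coprod_U^ST_U:=\coprod_U\mathrm{Ind}_U^VT_U$. A $\mathcal T$-weak indexing system is a full $\mathcal T$-subcategory with $\mathcal C_V\neq\emptyset\Rightarrow *_V\in\mathcal C_V$ and closed under $\coprod^S_UT_U$ for $S\in\mathcal C_V$, $T_U\in\mathcal C_U$; these form a lattice under inclusion. It is unital if every $\mathcal C_V$ is nonempty and $S\sqcup S'\in\mathcal C_V\Rightarrow S,S'\in\mathcal C_V$. A transfer system is a wide subcategory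 $R\subseteq\mathcal T$ containing all isomorphisms such that for every commutative square $V'\to V$, $\alpha':V'\to U'$, $\alpha:V\to U$, $U'\to U$ with $\alpha\in R$ and $V'\to V\times_UU'$ a summand inclusion in $\mathbb F_{\mathcal T}$, $\alpha'\in R$; $\mathrm{Transf}_{\mathcal T}$ is their poset under inclusion. For unital $\mathcal C$, $\mathfrak R(\mathcal C)$ is the transfer system of maps $U\to V$ in $\mathcal T$ with $U$ (as a $V$-set) in $\mathcal C_V$. *)

From mathcomp Require Import all_boot.
Set Implicit Arguments.
Unset Strict Implicit.
Unset Printing Implicit Defensive.

Record Cat := {
  Ob :> Type;
  Hom : Ob -> Ob -> Type;
  idm : forall A, Hom A A;
  comp : forall A B C, Hom B C -> Hom A B -> Hom A C;
  comp_idl : forall A B (f : Hom A B), comp (idm B) f = f;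
  comp_idr : forall A B (f : Hom A B), comp f (idm A) = f;
  comp_assoc : forall A B C D (h : Hom C D) (g : Hom B C) (f : Hom A B),
      comp h (comp g f) = comp (comp h g) f
}.
Arguments Hom {c}.
Arguments idm {c}.
Arguments comp {c A B C}.

Section FT.
Variable T : Cat.

Definition is_iso {A B : T} (f : Hom A B) : Prop :=
  exists g : Hom B A, comp g f = idm A /\ comp f g = idm B.

(** By Yoneda (representables are connected), the full subcategory of
    presheaves on finite coproducts of representables is the free
    finite-coproduct completion: an object is a finite family
    (U_i)_{i in I} of objects of T, a morphism (U_i)_i -> (V_j)_j is a
    choice, for each i, of j and a map U_i -> V_j. *)
Record FObj := { fidx : finType; fob : fidx -> Ob T }.
Arguments fob : clear implicits.

Definition FHom (X Y : FObj) : Type :=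
  forall i : fidx X, { j : fidx Y & Hom (fob X i) (fob Y j) }.

Definition feq {X Y : FObj} (f g : FHom X Y) : Prop := forall i, f i = g i.

Definition fid (X : FObj) : FHom X X := fun i => existT _ i (idm (fob X i)).
Arguments fid : clear implicits.

Definition fcomp {X Y Z : FObj} (g : FHom Y Z) (f : FHom X Y) : FHom X Z :=
  fun i => existT _ (projT1 (g (projT1 (f i))))
                    (comp (projT2 (g (projT1 (f i)))) (projT2 (f i))).

Definition fiso {X Y : FObj} (f : FHom X Y) : Prop :=
  exists g : FHom Y X, feq (fcomp g f) (fid X) /\ feq (fcomp f g) (fid Y).

Definition fsing (U : Ob T) : FObj := {| fidx := unit; fob := fun _ => U |}.
Definition fsingm {U V : Ob T} (f : Hom U V) : FHom (fsing U) (fsing V) :=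
  fun _ => existT (fun j : unit => Hom U V) tt f.

Definition fcoprod (X Y : FObj) : FObj :=
  {| fidx := (fidx X + fidx Y)%type;
     fob := fun k => match k with inl i => fob X i | inr j => fob Y j end |}.
Definition finl (X Y : FObj) : FHom X (fcoprod X Y) :=
  fun i => existT (fun k : fidx (fcoprod X Y) => Hom (fob X i) (fob (fcoprod X Y) k))
                  (inl i) (idm (fob X i)).
Arguments finl : clear implicits.

Definition summand_incl {A B : FObj} (h : FHom A B) : Prop :=
  exists (Y : FObj) (phi : FHom (fcoprod A Y) B),
    fiso phi /\ feq (fcomp phi (finl A Y)) h.

Definition is_pullback {A B C : FObj} (f : FHom A C) (g : FHom B C)
  (P : FObj) (p1 : FHom P A) (p2 : FHom P B) : Prop :=
  feq (fcomp f p1) (fcomp g p2) /\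
  forall (Q : FObj) (q1 : FHom Q A) (q2 : FHom Q B),
    feq (fcomp f q1) (fcomp g q2) ->
    exists u : FHom Q P,
      feq (fcomp p1 u) q1 /\ feq (fcomp p2 u) q2 /\
      forall u' : FHom Q P, feq (fcomp p1 u') q1 -> feq (fcomp p2 u') q2 -> feq u u'.

Definition orbital : Prop :=
  forall (A B C : FObj) (f : FHom A C) (g : FHom B C),
    exists (P : FObj) (p1 : FHom P A) (p2 : FHom P B), is_pullback f g p1 p2.

Record SObj (V : Ob T) := { sobj : FObj; smap : forall i : fidx sobj, Hom (fob sobj i) V }.
Arguments sobj {V}.
Arguments smap {V} s i.

Definition sstr {V : Ob T} (S : SObj V) : FHom (sobj S) (fsing V) :=
  fun i => existT (fun j : unit => Hom (fob (sobj S) i) V) tt (smap S i).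
Arguments sstr {V} S.

Definition over {V : Ob T} (X Y : SObj V) (f : FHom (sobj X) (sobj Y)) : Prop :=
  forall i, comp (smap Y (projT1 (f i))) (projT2 (f i)) = smap X i.
Arguments over {V} X Y f.

Definition siso {V : Ob T} (X Y : SObj V) : Prop :=
  exists (f : FHom (sobj X) (sobj Y)) (g : FHom (sobj Y) (sobj X)),
    over X Y f /\ over Y X g /\
    feq (fcomp g f) (fid (sobj X)) /\ feq (fcomp f g) (fid (sobj Y)).

Definition sterm (V : Ob T) : SObj V :=
  {| sobj := fsing V; smap := fun _ => idm V |}.

Definition sorb {U V : Ob T} (f : Hom U V) : SObj V :=
  {| sobj := fsing U; smap := fun _ => f |}.

Definition scoprod {V : Ob T} (X Y : SObj V) : SObj V :=
  {| sobj := fcoprod (sobj X) (sobj Y);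
     smap := fun k => match k with inl i => smap X i | inr j => smap Y j end |}.

Definition Ind {U V : Ob T} (a : Hom U V) (X : SObj U) : SObj V :=
  {| sobj := sobj X; smap := fun i => comp a (smap X i) |}.

Definition is_Res {U V : Ob T} (a : Hom U V) (X : SObj V) (R : SObj U) : Prop :=
  exists (p1 : FHom (sobj R) (sobj X)),
    is_pullback (sstr X) (fsingm a) p1 (sstr R).

(** coproduct_{U}^{S} T_U := coproduct over the orbits U_i of S of Ind T_i *)
Definition sbigcoprod {V : Ob T} (S : SObj V)
    (TU : forall i : fidx (sobj S), SObj (fob (sobj S) i)) : SObj V :=
  {| sobj := {| fidx := ({i : fidx (sobj S) & fidx (sobj (TU i))} : finType);
                fob := fun k => fob (sobj (TU (projT1 k))) (projT2 k) |};
     smap := fun k => comp (smap S (projT1 k)) (smap (TU (projT1 k)) (projT2 k)) |}.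

Arguments sbigcoprod {V} S TU.

Definition TClass := forall V : Ob T, SObj V -> Prop.

Definition full_Tsubcat (C : TClass) : Prop :=
  (forall V (X Y : SObj V), siso X Y -> C V X -> C V Y) /\
  (forall U V (a : Hom U V) (X : SObj V) (R : SObj U),
      C V X -> is_Res a X R -> C U R).

Definition weak_indexing_system (C : TClass) : Prop :=
  full_Tsubcat C /\
  (forall V, (exists X, C V X) -> C V (sterm V)) /\
  (forall V (S : SObj V) (TU : forall i : fidx (sobj S), SObj (fob (sobj S) i)),
      C V S -> (forall i, C _ (TU i)) -> C V (sbigcoprod S TU)).

Definition unital_wis (C : TClass) : Prop :=
  weak_indexing_system C /\
  (forall V, exists X, C V X) /\
  (forall V (X Y : SObj V), C V (scoprod X Y) -> C V X /\ C V Y).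

Definition wis_join (C D : TClass) : TClass := fun V X =>
  forall E : TClass, weak_indexing_system E ->
    (forall W Y, C W Y -> E W Y) -> (forall W Y, D W Y -> E W Y) -> E V X.

Definition wis_meet (C D : TClass) : TClass := fun V X => C V X /\ D V X.

Definition MorClass := forall U V : Ob T, Hom U V -> Prop.

Definition transfer_system (R : MorClass) : Prop :=
  (forall U V (f : Hom U V), is_iso f -> R U V f) /\
  (forall A B C (f : Hom A B) (g : Hom B C), R A B f -> R B C g -> R A C (comp g f)) /\
  (forall V' V U U' (a : Hom V' V) (al' : Hom V' U') (al : Hom V U) (b : Hom U' U),
      comp al a = comp b al' -> R V U al ->
      forall (P : FObj) (p1 : FHom P (fsing V)) (p2 : FHom P (fsing U')),
        is_pullback (fsingm al) (fsingm b) p1 p2 ->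
      forall h : FHom (fsing V') P,
        feq (fcomp p1 h) (fsingm a) -> feq (fcomp p2 h) (fsingm al') ->
        summand_incl h -> R V' U' al').

Definition tr_join (R1 R2 : MorClass) : MorClass := fun U V f =>
  forall Q : MorClass, transfer_system Q ->
    (forall A B g, R1 A B g -> Q A B g) -> (forall A B g, R2 A B g -> Q A B g) ->
    Q U V f.

Definition Rfrak (C : TClass) : MorClass := fun U V f => C V (sorb f).

End FT.

(* Let J be the join of C and D. The class of maps R(J) is a transfer system as soon as J is
   closed under passing to orbits, and this closure follows from minimality of J: the V-sets
   all of whose restrictions have all their orbits in J form a weak indexing system, which
   contains the unital C and D. Hence R(C) v R(D) <= R(J). Conversely, the V-sets all of whose
   orbits lie in Q := R(C) v R(D) form a weak indexing system containing C and D; it contains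
   J, which gives R(J) <= Q. *)

From mathcomp Require Import all_boot.
From Stdlib Require Import ClassicalEpsilon.

Set Implicit Arguments.
Unset Strict Implicit.
Unset Printing Implicit Defensive.

(* Maximal implicits, so that [/eq_from_Tagged] works as a view. *)
Local Arguments eq_from_Tagged {I T_ i t s} _.

Section Theory.
Variable T : Cat.
Implicit Types (P Q X Y Z : FObj T) (U V W : T).

(** * Points *)

(* Maps from the representable [W] to [X] in F_T; they detect equality of maps and
   pullbacks (Yoneda). *)
Definition point X W := {i : fidx X & Hom W (fob i)}.

Definition pmap X Y (f : FHom X Y) {W} (x : point X W) : point Y W :=
  existT _ (projT1 (f (projT1 x))) (comp (projT2 (f (projT1 x))) (projT2 x)).

Definition ptcomp X W W' (x : point X W) (t : Hom W' W) : point X W' :=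
  existT _ (projT1 x) (comp (projT2 x) t).

Definition ptid X (k : fidx X) : point X (fob k) := existT _ k (idm _).

Lemma pmap_comp X Y Z (g : FHom Y Z) (f : FHom X Y) W (x : point X W) :
  pmap (fcomp g f) x = pmap g (pmap f x).
Proof. by rewrite /pmap /fcomp /= comp_assoc. Qed.

Lemma pmap_id X W (x : point X W) : pmap (@fid _ X) x = x.
Proof. by case: x => i h; rewrite /pmap /fid /= comp_idl. Qed.

Lemma pmap_ptcomp X Y (f : FHom X Y) W W' (x : point X W) (t : Hom W' W) :
  pmap f (ptcomp x t) = ptcomp (pmap f x) t.
Proof. by rewrite /pmap /ptcomp /= comp_assoc. Qed.

Lemma pmap_ptid X Y (f : FHom X Y) (k : fidx X) : pmap f (ptid k) = f k.
Proof. by rewrite /pmap /ptid /=; case: (f k) => j h /=; rewrite comp_idr. Qed.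

Lemma feqP X Y (f g : FHom X Y) :
  feq f g <-> forall W (x : point X W), pmap f x = pmap g x.
Proof.
split=> [e W x | e i]; first by rewrite /pmap e.
by have := e _ (ptid i); rewrite !pmap_ptid.
Qed.

Lemma mono_point_iso Y X (u : FHom Y X) (k : fidx X) (h : point Y (fob k)) :
  (forall W (y y' : point Y W), pmap u y = pmap u y' -> y = y') ->
  pmap u h = ptid k -> is_iso (projT2 h).
Proof.
case: h => k' rho /= u_mono; rewrite /pmap /=.
case Eu: (u k') => [k'' chi] /= [ek]; subst k'' => /eq_from_Tagged chi_rho.
exists chi; split=> //.
suff /eq_from_Tagged : ptcomp (existT _ k' rho) chi = ptid k' by [].
by apply: u_mono; rewrite pmap_ptcomp pmap_ptid /pmap /ptcomp /= Eu /= chi_rho comp_idl.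
Qed.

Lemma pmap_fsingm_comp (U U' U'' : T) (f : Hom U' U'') (g : Hom U U') W
    (y : point (fsing U) W) :
  pmap (fsingm f) (pmap (fsingm g) y) = pmap (fsingm (comp f g)) y.
Proof. by case: y => -[] t; rewrite /pmap /= comp_assoc. Qed.

Definition fincl X (i : fidx X) : FHom (fsing (fob i)) X := fun _ => ptid i.
Arguments fincl {X} i _.

Lemma fincl_inj X (i : fidx X) W (y y' : point (fsing (fob i)) W) :
  pmap (fincl i) y = pmap (fincl i) y' -> y = y'.
Proof.
by case: y y' => -[] t [[] t']; rewrite /pmap /= !comp_idl => /eq_from_Tagged ->.
Qed.

Definition pointwise_pullback A B C (f : FHom A C) (g : FHom B C) P
    (p1 : FHom P A) (p2 : FHom P B) : Prop :=
  [/\ forall W (z : point P W), pmap f (pmap p1 z) = pmap g (pmap p2 z),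
      forall W (x : point A W) (y : point B W), pmap f x = pmap g y ->
        exists z, pmap p1 z = x /\ pmap p2 z = y &
      forall W (z z' : point P W),
        pmap p1 z = pmap p1 z' -> pmap p2 z = pmap p2 z' -> z = z'].

Lemma pullbackP A B C (f : FHom A C) (g : FHom B C) P (p1 : FHom P A) (p2 : FHom P B) :
  is_pullback f g p1 p2 <-> pointwise_pullback f g p1 p2.
Proof.
split=> [[/feqP comm univ] | [comm lift uniq]]; last first.
  split=> [| Q q1 q2 /feqP q_comm]; first by apply/feqP => W z; rewrite !pmap_comp.
  have q_lift k : {z : point P (fob k) | pmap p1 z = q1 k /\ pmap p2 z = q2 k}.
    apply: constructive_indefinite_description; apply: lift.
    by have := q_comm _ (ptid k); rewrite !pmap_comp !pmap_ptid.
  exists (fun k => sval (q_lift k)); split; [|split].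
  - by move=> k; case: (svalP (q_lift k)).
  - by move=> k; case: (svalP (q_lift k)).
  - move=> u' u1 u2 k; case: (svalP (q_lift k)) => e1 e2; apply: uniq.
      by rewrite e1 -(u1 k).
    by rewrite e2 -(u2 k).
split=> [W z | W x y e | W z z' e1 e2].
- by rewrite -!pmap_comp comm.
- have [u [u1 [u2 _]]] := univ (fsing W) (fun _ => x) (fun _ => y) (fun _ => e).
  by exists (u tt); split; [exact: (u1 tt) | exact: (u2 tt)].
- pose q1 : FHom (fsing W) A := fun _ => pmap p1 z.
  pose q2 : FHom (fsing W) B := fun _ => pmap p2 z.
  have e : feq (fcomp f q1) (fcomp g q2).
    move=> []; rewrite -[fcomp f q1 tt]/(pmap f (pmap p1 z)) -[fcomp g q2 tt]/(pmap g _).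
    by rewrite -!pmap_comp comm.
  have [u [_ [_ u_uniq]]] := univ (fsing W) _ _ e.
  have := u_uniq (fun _ => z) (fun _ => erefl) (fun _ => erefl) tt.
  by rewrite (u_uniq (fun _ => z') (fun _ => esym e1) (fun _ => esym e2) tt).
Qed.

(* The comparison map from [Q] to the pullback is injective on points, so
   [mono_point_iso] applies. *)
Lemma pullback_lift_iso A B C (f : FHom A C) (g : FHom B C) P (p1 : FHom P A)
    (p2 : FHom P B) Q (q1 : FHom Q A) (q2 : FHom Q B) (k : fidx P)
    (h : point Q (fob k)) :
  is_pullback f g p1 p2 ->
  (forall W (y : point Q W), pmap f (pmap q1 y) = pmap g (pmap q2 y)) ->
  (forall W (y y' : point Q W),
      pmap q1 y = pmap q1 y' -> pmap q2 y = pmap q2 y' -> y = y') ->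
  pmap q1 h = p1 k -> pmap q2 h = p2 k -> is_iso (projT2 h).
Proof.
move=> pb q_comm q_mono h1 h2; have [_ univ] := pb; have /pullbackP [_ _ uniq] := pb.
have q_comm' : feq (fcomp f q1) (fcomp g q2).
  by apply/feqP => W y; rewrite !pmap_comp.
have [u [/feqP u1 [/feqP u2 _]]] := univ Q q1 q2 q_comm'.
apply: (@mono_point_iso _ _ u) => [W y y' e | ].
  by apply: q_mono; rewrite -?u1 -?u2 !pmap_comp e.
by apply: uniq; rewrite pmap_ptid -?h1 -?h2 -?u1 -?u2 pmap_comp.
Qed.

(** * Splitting off an orbit *)

Definition fcompl X (k : fidx X) : FObj T :=
  {| fidx := ({x : fidx X | x != k} : finType); fob := fun x => fob (val x) |}.

Definition orbit_split X (k : fidx X) W (ph : Hom W (fob k)) :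
    FHom (fcoprod (fsing W) (fcompl k)) X := fun c =>
  match c return {j : fidx X & Hom (@fob _ (fcoprod (fsing W) (fcompl k)) c) (fob j)} with
  | inl _ => existT _ k ph
  | inr y => existT _ (val y) (idm _)
  end.

Definition idx_cast X (x y : fidx X) (e : x = y) : Hom (fob x) (fob y) :=
  ecast y (Hom (fob x) (fob y)) e (idm (fob x)).

Lemma idx_cast_id X (x : fidx X) (e : x = x) : idx_cast e = idm (fob x).
Proof. by rewrite (eq_irrelevance e erefl). Qed.

Lemma orbit_split_fiso X (k : fidx X) W (ph : Hom W (fob k)) :
  is_iso ph -> fiso (orbit_split ph).
Proof.
move=> [phi [e1 e2]].
pose Z := fcoprod (fsing W) (fcompl k).
exists (fun x => match eq_comparable x k with
  | left e => existT (fun j : fidx Z => Hom (fob x) (fob j)) (inl tt) (comp phi (idx_cast e))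
  | right ne => existT (fun j : fidx Z => Hom (fob x) (fob j))
                       (inr (exist _ x (introN eqP ne))) (idm _)
  end); split.
- case=> [[] | [x ne]]; rewrite /fcomp /=; case: eq_comparable => e /=.
  + by rewrite idx_cast_id comp_idr e1.
  + by [].
  + by case: (negP ne); apply/eqP.
  + by rewrite (bool_irrelevance (introN eqP e) ne) comp_idl.
- move=> x; rewrite /fcomp; case: eq_comparable => e /=.
  + by subst x; rewrite idx_cast_id comp_idr e2.
  + by rewrite comp_idl.
Qed.

(** * Slices *)

Lemma fiso_iso X Y (f : FHom X Y) : fiso f -> forall x, is_iso (projT2 (f x)).
Proof.
move=> [g [gf fg]] x; case E: (f x) => [y ph] /=.
have := gf x; rewrite /fcomp E /=.
case E': (g y) => [x' chi] /= [ex]; subst x' => /eq_from_Tagged chi_ph.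
exists chi; split=> //.
by have := fg y; rewrite /fcomp E' /= E /= => /eq_from_Tagged.
Qed.

Lemma summand_incl_fsingP W P (h : FHom (fsing W) P) :
  summand_incl h <-> is_iso (projT2 (h tt)).
Proof.
split=> [[Y [phi [phi_iso <-]]] | ].
  by rewrite /fcomp /= comp_idr; exact: fiso_iso phi_iso (inl tt).
case E: (h tt) => [k ph] /= ph_iso.
exists (fcompl k), (orbit_split ph); split; first exact: orbit_split_fiso.
by case; rewrite /fcomp E /= comp_idr.
Qed.

Lemma overP V (X Y : SObj V) (f : FHom (sobj X) (sobj Y)) :
  over (X := X) (Y := Y) f <->
  forall W (z : point (sobj X) W), pmap (sstr (S := Y)) (pmap f z) = pmap (sstr (S := X)) z.
Proof.
split=> [ov W [i t] | e i]; first by rewrite /pmap /= comp_assoc ov.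
by have := e _ (ptid i); rewrite /pmap /ptid /= !comp_idr => /eq_from_Tagged.
Qed.

Lemma siso_of_fiso V (X Y : SObj V) (f : FHom (sobj X) (sobj Y)) :
  over (X := X) (Y := Y) f -> fiso f -> siso X Y.
Proof.
move=> fX [g [gf fg]]; exists f, g; do !split=> //.
apply/overP => W y; move/overP: fX => <-.
by move/feqP: fg => fg; rewrite -(pmap_comp f g) fg pmap_id.
Qed.

Lemma siso_sym V (X Y : SObj V) : siso X Y -> siso Y X.
Proof. by case=> f [g [fX [gY [gf fg]]]]; exists g, f. Qed.

Lemma siso_orbit V (X Y : SObj V) : siso X Y ->
  forall y : fidx (sobj Y), exists (x : fidx (sobj X)) (ps : Hom (fob y) (fob x)),
    is_iso ps /\ comp (smap x) ps = smap y.
Proof.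
move=> [f [g [_ [gY [gf fg]]]]] y; have g_iso : fiso g by exists f.
have := gY y; have := fiso_iso g_iso y.
by case: (g y) => x ps /= ps_iso ps_smap; exists x, ps.
Qed.

Lemma iso_id (A : T) : is_iso (idm A).
Proof. by exists (idm A); rewrite comp_idl. Qed.

Lemma siso_sorb V W W' (ph : Hom W W') (f : Hom W V) (f' : Hom W' V) :
  is_iso ph -> comp f' ph = f -> siso (sorb f) (sorb f').
Proof.
move=> [phi [e1 e2]] e; apply: (@siso_of_fiso _ (sorb f) (sorb f') (fsingm ph)) => [[] // |].
by exists (fsingm phi); split=> -[]; rewrite /fcomp /= ?e1 ?e2.
Qed.

Lemma sterm_sorb V W (ph : Hom W V) : is_iso ph -> siso (sterm V) (sorb ph).
Proof.
move=> [phi [e1 e2]]; apply: (@siso_sorb _ _ _ phi) => //.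
by exists ph.
Qed.

Lemma sorb_comp (A B C : T) (f : Hom A B) (g : Hom B C) :
  siso (sbigcoprod (S := sorb g) (fun _ => sorb f)) (sorb (comp g f)).
Proof.
apply: (@siso_of_fiso _ (sbigcoprod (S := sorb g) (fun _ => sorb f)) (sorb (comp g f))
  (fun _ => existT (fun _ : unit => Hom A A) tt (idm A))).
  by move=> i; rewrite /= comp_idr.
exists (fun _ => existT (fun _ : {i : unit & unit} => Hom A A) (existT _ tt tt) (idm A)).
by split; [case=> [[] []] | case]; rewrite /fcomp /= comp_idl.
Qed.

(** * Restriction *)

Definition slice_of (P : FObj T) U (p : FHom P (fsing U)) : SObj U :=
  {| sobj := P; smap := fun x => projT2 (p x) |}.

Lemma Res_of_pullback U V (a : Hom U V) (X : SObj V) P (p1 : FHom P (sobj X))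
    (p2 : FHom P (fsing U)) :
  is_pullback (sstr (S := X)) (fsingm a) p1 p2 -> is_Res a X (slice_of p2).
Proof.
have /feqP p2E : feq (sstr (S := slice_of p2)) p2.
  by move=> x; rewrite /sstr /=; case: (p2 x) => -[].
move=> /pullbackP [comm lift uniq]; exists p1; apply/pullbackP.
split=> [W z | W x y /lift [z [z1 z2]] | W z z']; rewrite ?p2E //; last exact: uniq.
by exists z; rewrite p2E.
Qed.

Lemma Res_exists (HT : orbital T) U V (a : Hom U V) (X : SObj V) :
  exists R, is_Res a X R.
Proof.
have [P [p1 [p2 pb]]] := HT _ _ _ (sstr (S := X)) (fsingm a).
by exists (slice_of p2); apply: Res_of_pullback pb.
Qed.

Lemma Res_id V (X : SObj V) : is_Res (idm V) X X.
Proof.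
exists (@fid _ (sobj X)); apply/pullbackP; split.
- by move=> W z; rewrite pmap_id /pmap /= comp_idl.
- move=> W x [[] y] /= e; exists x; split; first exact: pmap_id.
  by rewrite e /pmap /= comp_idl.
- by move=> W z z'; rewrite !pmap_id.
Qed.

Lemma Res_siso U V (a : Hom U V) (X Y : SObj V) (R : SObj U) :
  siso X Y -> is_Res a Y R -> is_Res a X R.
Proof.
move=> [f [g [/overP fX [/overP gY [/feqP gf /feqP fg]]]]] [p1 /pullbackP [comm lift uniq]].
exists (fcomp g p1); apply/pullbackP; split.
- by move=> W z; rewrite pmap_comp gY comm.
- move=> W x y e; have [z [z1 z2]] := lift W (pmap f x) y (etrans (fX _ x) e).
  by exists z; rewrite pmap_comp z1 -pmap_comp gf pmap_id.
- move=> W z z'; rewrite !pmap_comp => e1 e2; apply: uniq => //.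
  by move/(congr1 (pmap f)): e1; rewrite -!(pmap_comp f g) !fg !pmap_id.
Qed.

Lemma Res_comp U' U V (a : Hom U V) (b : Hom U' U) (X : SObj V) (R : SObj U)
    (R' : SObj U') :
  is_Res a X R -> is_Res b R R' -> is_Res (comp a b) X R'.
Proof.
move=> [p1 /pullbackP [comm lift uniq]] [p1' /pullbackP [comm' lift' uniq']].
exists (fcomp p1 p1'); apply/pullbackP; split.
- by move=> W z; rewrite pmap_comp comm comm' pmap_fsingm_comp.
- move=> W x y e.
  have [w [w1 w2]] := lift W x (pmap (fsingm b) y) (etrans e (esym (pmap_fsingm_comp _ _ _))).
  have [z [z1 z2]] := lift' W w y w2.
  by exists z; rewrite pmap_comp z1.
- move=> W z z'; rewrite !pmap_comp => e1 e2; apply: uniq' => //.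
  by apply: uniq => //; rewrite !comm' e2.
Qed.

Lemma sstr_fincl V (X : SObj V) (i : fidx (sobj X)) W (y : point (fsing (fob i)) W) :
  pmap (sstr (S := X)) (pmap (fincl i) y) = pmap (fsingm (smap i)) y.
Proof. by case: y => -[] t; rewrite /pmap /= comp_idl. Qed.

Definition finj V (S : SObj V) (TU : forall i : fidx (sobj S), SObj (fob i))
    (i : fidx (sobj S)) : FHom (sobj (TU i)) (sobj (sbigcoprod TU)) :=
  fun j => ptid (X := sobj (sbigcoprod TU)) (existT _ i j).
Arguments finj {V S} TU i _.

Lemma finj_inj V (S : SObj V) TU (i : fidx (sobj S)) W (y y' : point (sobj (TU i)) W) :
  pmap (finj TU i) y = pmap (finj TU i) y' -> y = y'.
Proof.
case: y y' => j t [j' t']; rewrite /pmap /= !comp_idl => e.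
case: (e) => /eq_from_Tagged ej; subst j'.
by move/eq_from_Tagged: e => ->.
Qed.

Lemma sstr_finj V (S : SObj V) TU (i : fidx (sobj S)) W (y : point (sobj (TU i)) W) :
  pmap (sstr (S := sbigcoprod TU)) (pmap (finj TU i) y) =
  pmap (fsingm (smap i)) (pmap (sstr (S := TU i)) y).
Proof. by case: y => j t; rewrite /pmap /= comp_idl comp_assoc. Qed.

Lemma Res_sterm_iso U V (a : Hom U V) (R : SObj U) (k : fidx (sobj R)) :
  is_Res a (sterm V) R -> is_iso (smap k).
Proof.
move=> [p1 pb]; have /pullbackP [comm _ _] := pb.
apply: (pullback_lift_iso (q1 := fsingm a) (q2 := @fid _ (fsing U))
          (h := existT _ tt (smap k)) pb) => [W [[] t] | W y y' | |].
- by rewrite /pmap /= !comp_idl.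
- by rewrite !pmap_id.
- have := comm _ (ptid k); rewrite !pmap_ptid; case: (p1 k) => -[] t.
  by rewrite /pmap /= comp_idl => /eq_from_Tagged ->.
- by rewrite pmap_id.
Qed.

Lemma Res_orbit_summand U V (a : Hom U V) (X : SObj V) (R : SObj U) p1
    (k : fidx (sobj R)) i (m : Hom (fob k) (fob i)) P q1 q2
    (h : FHom (fsing (fob k)) P) :
  is_pullback (sstr (S := X)) (fsingm a) p1 (sstr (S := R)) -> p1 k = existT _ i m ->
  is_pullback (fsingm (smap i)) (fsingm a) q1 q2 ->
  feq (fcomp q1 h) (fsingm m) -> feq (fcomp q2 h) (fsingm (smap k)) -> summand_incl h.
Proof.
move=> pbR p1k pbP /(_ tt) hq1 /(_ tt) hq2; apply/summand_incl_fsingP.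
have /pullbackP [commP _ uniqP] := pbP.
apply: (pullback_lift_iso (q1 := fcomp (fincl i) q1) (q2 := q2) pbR) => [W y | W y y' | |].
- by rewrite pmap_comp sstr_fincl commP.
- by rewrite !pmap_comp => /fincl_inj; apply: uniqP.
- by rewrite pmap_comp -[pmap q1 _]/(fcomp q1 h tt) hq1 p1k /pmap /= comp_idl.
- exact: hq2.
Qed.

Lemma Res_bigcoprod_orbit_iso U V (a : Hom U V) (S : SObj V)
    (TU : forall i : fidx (sobj S), SObj (fob i)) (R R1 : SObj U) p r1
    (l : fidx (sobj R1)) (i : fidx (sobj S)) (sg : Hom (fob l) (fob i))
    (R2 : SObj (fob l)) r2 (k : fidx (sobj R)) (k2 : fidx (sobj R2))
    (rho : Hom (fob k) (fob k2)) :
  is_pullback (sstr (S := sbigcoprod TU)) (fsingm a) p (sstr (S := R)) ->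
  is_pullback (sstr (S := S)) (fsingm a) r1 (sstr (S := R1)) -> r1 l = existT _ i sg ->
  is_pullback (sstr (S := TU i)) (fsingm sg) r2 (sstr (S := R2)) ->
  pmap (finj TU i) (pmap r2 (existT _ k2 rho)) = p k ->
  comp (smap l) (comp (smap k2) rho) = smap k -> is_iso rho.
Proof.
move=> pbR /pullbackP [comm1 _ uniq1] r1l /pullbackP [comm2 _ uniq2] r2_rho rhoE.
have sq1 : comp (smap i) sg = comp a (smap l).
  by have := comm1 _ (ptid l); rewrite !pmap_ptid r1l /pmap /= => /eq_from_Tagged.
apply: (pullback_lift_iso (q1 := fcomp (finj TU i) r2)
  (q2 := fcomp (fsingm (smap l)) (sstr (S := R2))) (h := existT _ k2 rho) pbR)
  => [W y | W y y' | |]; rewrite ?pmap_comp //; last by rewrite /pmap /= rhoE.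
  by rewrite sstr_finj comm2 !pmap_fsingm_comp sq1.
move=> /finj_inj r2E lE; apply: uniq2 => //.
move: lE (comm2 _ y) (comm2 _ y'); rewrite r2E.
case: (pmap (sstr (S := R2)) y) => -[] t; case: (pmap (sstr (S := R2)) y') => -[] t'.
rewrite /pmap /= => /eq_from_Tagged lE -> /eq_from_Tagged sgE.
have := uniq1 _ (existT (fun x => Hom W (fob x)) l t) (existT _ l t').
by rewrite /pmap /= r1l /= lE sgE => /(_ erefl erefl) /eq_from_Tagged ->.
Qed.

Lemma Res_bigcoprod_orbit (HT : orbital T) U V (a : Hom U V) (S : SObj V)
    (TU : forall i : fidx (sobj S), SObj (fob i)) (R : SObj U) (k : fidx (sobj R)) :
  is_Res a (sbigcoprod TU) R ->
  exists (R1 : SObj U) (l : fidx (sobj R1)) (i : fidx (sobj S)) (sg : Hom (fob l) (fob i))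
         (R2 : SObj (fob l)) (k2 : fidx (sobj R2)),
    [/\ is_Res a S R1, is_Res sg (TU i) R2
      & siso (sorb (comp (smap l) (smap k2))) (sorb (smap k))].
Proof.
move=> [p pbR]; have /pullbackP [comm _ _] := pbR.
case pk: (p k) => [[i j] m].
have [R1 [r1 pbR1]] := Res_exists HT a S; have /pullbackP [_ lift1 _] := pbR1.
have [[l tau] [r1_tau /eq_from_Tagged /= tauE]] :
    exists z, pmap r1 z = existT _ i (comp (smap j) m) /\ pmap (sstr (S := R1)) z = sstr k.
  apply: lift1; have := comm _ (ptid k); rewrite !pmap_ptid pk /pmap /= -comp_assoc.
  by move=> ->.
move: r1_tau; rewrite /pmap /=.
case r1l: (r1 l) => [i' sg] /= [ei]; subst i' => /eq_from_Tagged sgE.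
have [R2 [r2 pbR2]] := Res_exists HT sg (TU i); have /pullbackP [_ lift2 _] := pbR2.
have [[k2 rho] [r2_rho /eq_from_Tagged /= rhoE]] :
    exists z, pmap r2 z = existT _ j m /\ pmap (sstr (S := R2)) z = existT _ tt tau.
  by apply: lift2; rewrite /pmap /= sgE.
have rho_smap : comp (smap l) (comp (smap k2) rho) = smap k by rewrite rhoE.
exists R1, l, i, sg, R2, k2; split; [by exists r1 | by exists r2 |].
apply: siso_sym; apply: (siso_sorb (ph := rho)); last by rewrite -comp_assoc.
apply: Res_bigcoprod_orbit_iso pbR pbR1 r1l pbR2 _ rho_smap.
by rewrite r2_rho pk /pmap /= comp_idl.
Qed.

(** * Weak indexing systems and transfer systems *)

Lemma wis_sorb_comp (J : TClass T) (A B C : T) (f : Hom A B) (g : Hom B C) :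
  weak_indexing_system J -> J _ (sorb g) -> J _ (sorb f) -> J _ (sorb (comp g f)).
Proof.
move=> [[J_iso _] [_ J_co]] Jg Jf.
exact: J_iso (sorb_comp f g) (J_co _ _ _ Jg (fun _ => Jf)).
Qed.

Lemma unital_orbit (C : TClass T) V (X : SObj V) (k : fidx (sobj X)) :
  unital_wis C -> C V X -> C _ (sorb (smap k)).
Proof.
move=> [[[C_iso _] _] [_ C_summand]] CX.
pose B : SObj V := {| sobj := fcompl k; smap := fun x => smap (val x) |}.
have XE : siso X (scoprod (sorb (smap k)) B).
  apply: siso_sym.
  apply: (@siso_of_fiso _ (scoprod (sorb (smap k)) B) X (orbit_split (idm (fob k)))).
    by case=> [[] | y]; rewrite /= comp_idr.
  exact: orbit_split_fiso (iso_id _).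
by case: (C_summand _ _ _ (C_iso _ _ _ XE CX)).
Qed.

Lemma wis_join_wis (C D : TClass T) : weak_indexing_system (wis_join C D).
Proof.
split; [split | split].
- move=> V X Y XY JX E hE EC ED; have [[E_iso _] _] := hE.
  exact: E_iso XY (JX E hE EC ED).
- move=> U V a X R JX XR E hE EC ED; have [[_ E_res] _] := hE.
  exact: E_res _ _ _ _ _ (JX E hE EC ED) XR.
- move=> V [X JX] E hE EC ED; have [_ [E_term _]] := hE.
  by apply: E_term; exists X; exact: JX E hE EC ED.
- move=> V S TU JS JTU E hE EC ED; have [_ [_ E_co]] := hE.
  by apply: E_co => [|i]; [exact: JS E hE EC ED | exact: JTU i E hE EC ED].
Qed.

Lemma tr_join_ts (R1 R2 : MorClass T) : transfer_system (tr_join R1 R2).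
Proof.
split; [|split].
- by move=> U V f f_iso Q [Q_iso _] _ _; exact: Q_iso.
- move=> A B C f g Rf Rg Q hQ Q1 Q2; have [_ [Q_comp _]] := hQ.
  exact: Q_comp (Rf Q hQ Q1 Q2) (Rg Q hQ Q1 Q2).
- move=> V' V U U' a al' al b sq Ral P p1 p2 pb h h1 h2 hs Q hQ Q1 Q2.
  have [_ [_ Q_res]] := hQ.
  exact: Q_res _ _ _ _ _ _ _ _ sq (Ral Q hQ Q1 Q2) _ _ _ pb h h1 h2 hs.
Qed.

Definition restr_orbits_in (J : TClass T) : TClass T := fun V (X : SObj V) =>
  forall U (a : Hom U V) (R : SObj U),
    is_Res a X R -> forall k : fidx (sobj R), J _ (sorb (smap k)).

Definition orbits_in (Q : MorClass T) : TClass T := fun V (X : SObj V) =>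
  forall k : fidx (sobj X), Q _ _ (smap k).
Arguments restr_orbits_in : clear implicits.
Arguments orbits_in : clear implicits.

Lemma unital_sub_restr_orbits (C J : TClass T) :
  unital_wis C -> (forall V (X : SObj V), C V X -> J V X) ->
  forall V (X : SObj V), C V X -> restr_orbits_in J V X.
Proof.
move=> hC CJ V X CX U a R XR k; have [[[_ C_res] _] _] := hC.
exact/CJ/(unital_orbit k hC)/(C_res _ _ _ _ _ CX XR).
Qed.

Lemma restr_orbits_in_wis (HT : orbital T) (J : TClass T) :
  weak_indexing_system J -> (forall V, J V (sterm V)) ->
  weak_indexing_system (restr_orbits_in J).
Proof.
move=> hJ J_term; have [[J_iso _] _] := hJ.
split; [split | split].
- by move=> V X Y XY EX U a R YR; apply: EX; exact: Res_siso XY YR.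
- by move=> U V a X R EX XR U' b R' RR'; apply: EX; exact: Res_comp XR RR'.
- move=> V _ U a R termR k.
  exact: J_iso (sterm_sorb (Res_sterm_iso k termR)) (J_term U).
- move=> V S TU ES ETU U a R HR k.
  have [R1 [l [i [sg [R2 [k2 [SR1 TR2 kE]]]]]]] := Res_bigcoprod_orbit HT k HR.
  apply: J_iso kE _; apply: wis_sorb_comp hJ _ _.
    exact: ES _ _ _ SR1 l.
  exact: ETU _ _ _ _ TR2 k2.
Qed.

Lemma unital_sub_orbits_in (C : TClass T) (Q : MorClass T) :
  unital_wis C -> (forall U V (f : Hom U V), Rfrak C f -> Q U V f) ->
  forall V (X : SObj V), C V X -> orbits_in Q V X.
Proof. by move=> hC CQ V X CX k; apply: CQ; exact: unital_orbit. Qed.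

Lemma orbits_in_wis (HT : orbital T) (Q : MorClass T) :
  transfer_system Q -> weak_indexing_system (orbits_in Q).
Proof.
move=> [Q_iso [Q_comp Q_res]].
split; [split | split].
- move=> V X Y XY QX y; have [x [ps [ps_iso <-]]] := siso_orbit XY y.
  exact: Q_comp (Q_iso _ _ _ ps_iso) (QX x).
- move=> U V a X R QX [p1 pbR] k; case p1k: (p1 k) => [i m].
  have sq : comp (smap i) m = comp a (smap k).
    have /pullbackP [comm _ _] := pbR.
    by have := comm _ (ptid k); rewrite !pmap_ptid p1k /pmap /= => /eq_from_Tagged.
  have [P [q1 [q2 pbP]]] := HT _ _ _ (fsingm (smap i)) (fsingm a).
  have [u [u1 [u2 _]]] :=
    pbP.2 _ (fsingm m) (fsingm (smap k)) (fun _ => congr1 (existT _ tt) sq).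
  exact: Q_res _ _ _ _ m _ _ a sq (QX i) _ _ _ pbP u u1 u2
    (Res_orbit_summand pbR p1k pbP u1 u2).
- by move=> V _ k; exact: Q_iso (iso_id V).
- by move=> V S TU QS QTU [i j]; exact: Q_comp (QTU i j) (QS i).
Qed.

Lemma Rfrak_transfer_system (J : TClass T) :
  weak_indexing_system J -> (forall V, J V (sterm V)) ->
  (forall V (X : SObj V) (k : fidx (sobj X)), J V X -> J _ (sorb (smap k))) ->
  transfer_system (Rfrak J).
Proof.
move=> hJ J_term J_orbit; have [[J_iso J_res] _] := hJ.
split; [|split].
- by move=> U V f f_iso; exact: J_iso (sterm_sorb f_iso) (J_term V).
- by move=> A B C f g Jf Jg; exact: wis_sorb_comp hJ Jg Jf.
- move=> V' V U U' a al' al b _ Jal P p1 p2 pb h _ /(_ tt) h2 /summand_incl_fsingP h_iso.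
  have JP := J_res _ _ _ _ _ Jal (Res_of_pullback (X := sorb al) pb).
  have := J_orbit _ (slice_of p2) (projT1 (h tt)) JP.
  apply: J_iso; apply: siso_sym; apply: (siso_sorb h_iso).
  by move: h2; rewrite /fcomp /=; case: (p2 _) => -[] s /= /eq_from_Tagged.
Qed.

Section Join.
Unset Implicit Arguments.
Hypothesis HT : orbital T.
Variables C D : TClass T.
Hypotheses (hC : unital_wis C) (hD : unital_wis D).

Lemma sub_wis_join_l V (X : SObj V) : C V X -> wis_join C D X.
Proof. by move=> CX E _ EC _; exact: EC. Qed.

Lemma sub_wis_join_r V (X : SObj V) : D V X -> wis_join C D X.
Proof. by move=> DX E _ _ ED; exact: ED. Qed.

Lemma wis_join_term V : wis_join C D (sterm V).
Proof.
have [_ [J_term _]] := wis_join_wis C D; apply: J_term.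
have [_ [C_ne _]] := hC; have [X CX] := C_ne V.
by exists X; exact: sub_wis_join_l.
Qed.

Lemma wis_join_orbit V (X : SObj V) (k : fidx (sobj X)) :
  wis_join C D X -> wis_join C D (sorb (smap k)).
Proof.
move=> JX; have : restr_orbits_in (wis_join C D) V X.
  apply: JX; first exact: (restr_orbits_in_wis HT (wis_join_wis C D) wis_join_term).
    exact: unital_sub_restr_orbits hC sub_wis_join_l.
  exact: unital_sub_restr_orbits hD sub_wis_join_r.
by move/(_ _ _ _ (Res_id X) k).
Qed.

Lemma tr_join_sub_Rfrak_join U V (f : Hom U V) :
  tr_join (Rfrak C) (Rfrak D) f -> Rfrak (wis_join C D) f.
Proof.
apply=> [|A B g|A B g]; last exact: sub_wis_join_r.
  exact: Rfrak_transfer_system (wis_join_wis C D) wis_join_term wis_join_orbit.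
exact: sub_wis_join_l.
Qed.

Lemma Rfrak_join_sub_tr_join U V (f : Hom U V) :
  Rfrak (wis_join C D) f -> tr_join (Rfrak C) (Rfrak D) f.
Proof.
move=> Jf; apply: (Jf _ (orbits_in_wis HT (tr_join_ts (Rfrak C) (Rfrak D))) _ _ tt).
  by apply: unital_sub_orbits_in hC _ => A B g Cg Q _ QC _; exact: QC.
by apply: unital_sub_orbits_in hD _ => A B g Dg Q _ _ QD; exact: QD.
Qed.

End Join.

End Theory.

Theorem mainTheorem16 (T : Cat) (HT : orbital T) (C D : TClass T) :
  unital_wis C -> unital_wis D ->
  (forall (U V : Ob T) (f : Hom U V),
      tr_join (Rfrak C) (Rfrak D) f <-> Rfrak (wis_join C D) f) /\
  (forall (U V : Ob T) (f : Hom U V),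
      (Rfrak C f /\ Rfrak D f) <-> Rfrak (wis_meet C D) f).
Proof.
move=> hC hD; split=> U V f; last by [].
by split; [exact: tr_join_sub_Rfrak_join | exact: Rfrak_join_sub_tr_join].
Qed.
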